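(* If $R$ is an Armendariz ring, then for every $n\ge 1$ the upper triangular matrix ring $T_n(R)$ is almost Armendariz.
   Context: All rings are associative with identity. A ring $R$ is Armendariz if whenever $f(x)=\sum_{i=0}^m a_ix^i$, $g(x)=\sum_{j=0}^n b_jx^j\in R[x]$ satisfy $f(x)g(x)=0$, then $a_ib_j=0$ for all $i,j$. For a ring $R$, $P(R)$ denotes the prime radical of $R$ (the intersection of all prime ideals of $R$, equivalently the set of strongly nilpotent elements of $R$). A ring $R$ is called almost Armendariz if whenever $f(x)=\sum_{i=0}^m a_ix^i$ and $g(x)=\sum_{j=0}^n b_jx^j\in R[x]$ satisfy $f(x)g(x)=0$, then $a_ib_j\in P(R)$ for all $0\le i\le m$, $0\le j\le n$. $T_n(R)$ denotes the ring of $n\times n$ upper triangular matrices over $R$. *)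

From HB Require Import structures.
From mathcomp Require Import all_boot all_order all_algebra.
Set Implicit Arguments. Unset Strict Implicit. Unset Printing Implicit Defensive.
Import GRing.Theory.
Local Open Scope ring_scope.

Definition armendariz (R : nzRingType) : Prop :=
  forall f g : {poly R}, f * g = 0 ->
    forall i j : nat, f`_i * g`_j = 0.

Definition prime_ideal (R : nzRingType) (P : R -> Prop) : Prop :=
  [/\ P 0, (forall x y, P x -> P y -> P (x - y)),
      (forall r x, P x -> P (r * x) /\ P (x * r)),
      ~ P 1 &
      (forall a b, (forall r, P (a * r * b)) -> P a \/ P b)].

Definition prime_radical (R : nzRingType) (x : R) : Prop :=
  forall P : R -> Prop, prime_ideal P -> P x.

Definition almost_armendariz (R : nzRingType) : Prop :=
  forall f g : {poly R}, f * g = 0 ->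
    forall i j : nat, prime_radical (f`_i * g`_j).

Section UpperTriangular.
Variables (R : nzRingType) (n : nat).

Definition upper_tri : {pred 'M[R]_n.+1} :=
  fun A => [forall i : 'I_n.+1, forall j : 'I_n.+1, (j < i)%N ==> (A i j == 0)].

Fact upper_tri_subring_closed : subring_closed upper_tri.
Proof.
split.
- apply/forallP => i; apply/forallP => j; apply/implyP => lt_ji.
  rewrite mxE; have ne : (i == j) = false by apply/eqP => eij; rewrite eij ltnn in lt_ji.
  by rewrite ne.
- move=> A B /forallP hA /forallP hB.
  apply/forallP => i; apply/forallP => j; apply/implyP => lt_ji.
  rewrite !mxE (eqP (implyP (forallP (hA i) j) lt_ji)).
  by rewrite (eqP (implyP (forallP (hB i) j) lt_ji)) subrr.
- move=> A B /forallP hA /forallP hB.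
  apply/forallP => i; apply/forallP => j; apply/implyP => lt_ji.
  rewrite !mxE; apply/eqP; apply: big1 => k _.
  case: (ltnP k i) => hk.
  + by rewrite (eqP (implyP (forallP (hA i) k) hk)) mul0r.
  + by rewrite (eqP (implyP (forallP (hB k) j) (leq_trans lt_ji hk))) mulr0.
Qed.

HB.instance Definition _ := GRing.isSubringClosed.Build _ upper_tri
  upper_tri_subring_closed.

Record uptri_mx := UpTri { uptri_val :> 'M[R]_n.+1; _ : uptri_val \in upper_tri }.

HB.instance Definition _ := [isSub for uptri_val].
HB.instance Definition _ := [Choice of uptri_mx by <:].
HB.instance Definition _ := [SubChoice_isSubNzRing of uptri_mx by <:].

End UpperTriangular.

(* T_n(R) for n >= 1 : written T_(m.+1) with m : nat. *)
Notation "''T_' n [ R ]" := (uptri_mx R n.-1)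
  (at level 8, n at level 2, format "''T_' n [ R ]") : type_scope.

(* An element of T_n(R) lies in the prime radical as soon as its diagonal is
zero: strictly upper triangular matrices form an ideal whose n-th power
vanishes, so they lie in every prime ideal.  Each diagonal entry is a ring
morphism T_n(R) -> R, so applying it coefficientwise to f g = 0 yields a
product of two polynomials over R that vanishes; since R is Armendariz, the
diagonal of a_i b_j is zero. *)

From HB Require Import structures.
From mathcomp Require Import all_boot all_order all_algebra.
Local Open Scope ring_scope.
Import GRing.Theory.

Set Implicit Arguments.
Unset Strict Implicit.
Unset Printing Implicit Defensive.

Section UpperBand.
Variables (R : pzRingType) (n : nat).

Definition upper_band (k : nat) (A : 'M[R]_n) : Prop :=
  forall i j : 'I_n, (j < i + k)%N -> A i j = 0.

Lemma upper_band_mul a b A B :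
  upper_band a A -> upper_band b B -> upper_band (a + b) (A *m B).
Proof.
move=> bandA bandB i j lt_j; rewrite mxE; apply: big1 => l _.
have [lt_l | le_l] := ltnP l (i + a); first by rewrite bandA // mul0r.
by rewrite bandB ?mulr0 // (leq_trans lt_j) // addnA leq_add2r.
Qed.

Lemma upper_band_le a b A : (a <= b)%N -> upper_band b A -> upper_band a A.
Proof. by move=> le_ab bandA i j lt_j; rewrite bandA // (leq_trans lt_j) ?leq_add2l. Qed.

Lemma upper_band_size_eq0 A : upper_band n A -> A = 0.
Proof.
by move=> bandA; apply/matrixP => i j; rewrite mxE bandA // (leq_trans (ltn_ord j)) ?leq_addl.
Qed.

End UpperBand.

Section TriangularRing.
Variables (R : nzRingType) (m : nat).
Local Notation T := 'T_m.+1[R].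

Lemma uptri_band0 (A : T) : upper_band 0 (val A).
Proof.
case: A => A /= /forallP triA i j; rewrite addn0 => lt_ji.
exact: eqP (implyP (forallP (triA i) j) lt_ji).
Qed.

Lemma val_uptriM (A B : T) : val (A * B) = val A *m val B.
Proof. by rewrite rmorphM /= mulmxE. Qed.

Lemma strictly_uptri_mem_prime (P : T -> Prop) :
  prime_ideal P -> forall x : T, upper_band 1 (val x) -> P x.
Proof.
case=> P0 _ _ _ Pprime.
(* x r x lies one band deeper than x; descend until the band is empty. *)
suff bandP d : forall k (x : T), (m.+1 <= k + d)%N -> upper_band k.+1 (val x) -> P x.
  by move=> x; apply: (bandP m.+1 0%N).
elim: d => [|d IHd] k x le_m bandx.
  rewrite addn0 in le_m.
  suff -> : x = 0 by [].
  by apply/val_inj/upper_band_size_eq0; apply: upper_band_le bandx; apply: leqW.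
suff xRx : forall r, P (x * r * x) by case: (Pprime _ _ xRx).
move=> r; apply: (IHd k.+1); first by rewrite addSnnS.
rewrite -mulrA !val_uptriM; apply: (@upper_band_le _ _ _ (k.+1 + (0 + k.+1))).
  by rewrite add0n addSn ltnS leq_addl.
by apply: upper_band_mul => //; apply: upper_band_mul => //; apply: uptri_band0.
Qed.

Lemma strictly_uptri_prime_radical (x : T) :
  upper_band 1 (val x) -> prime_radical x.
Proof. by move=> bandx P primeP; apply: strictly_uptri_mem_prime. Qed.

Definition uptri_diag (k : 'I_m.+1) (A : T) : R := val A k k.

Lemma uptri_diag_is_zmod_morphism k : zmod_morphism (uptri_diag k).
Proof. by move=> A B; rewrite /uptri_diag /= !mxE. Qed.

HB.instance Definition _ k := GRing.isZmodMorphism.Build T R (uptri_diag k)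
  (uptri_diag_is_zmod_morphism k).

(* Only the diagonal term of the sum survives, since A and B are triangular. *)
Lemma uptri_diag_is_monoid_morphism k : monoid_morphism (uptri_diag k).
Proof.
split=> [|A B]; first by rewrite /uptri_diag /= mxE eqxx.
rewrite /uptri_diag val_uptriM mxE (bigD1 k) //= big1 ?addr0 // => l /negPf ne_lk.
have [lt_lk | lt_kl | eq_lk] := ltngtP l k.
- by rewrite (uptri_band0 A) ?addn0 // mul0r.
- by rewrite (uptri_band0 B) ?addn0 // mulr0.
- by move: ne_lk; rewrite (val_inj eq_lk) eqxx.
Qed.

HB.instance Definition _ k := GRing.isMonoidMorphism.Build T R (uptri_diag k)
  (uptri_diag_is_monoid_morphism k).

Lemma uptri_diag0_prime_radical (x : T) :
  (forall k, uptri_diag k x = 0) -> prime_radical x.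
Proof.
move=> diag0; apply: strictly_uptri_prime_radical => i j.
rewrite addn1 ltnS leq_eqVlt => /predU1P [eq_ji | lt_ji].
  by rewrite (val_inj eq_ji); apply: diag0.
by rewrite uptri_band0 ?addn0.
Qed.

End TriangularRing.

Theorem corollary2p1 (R : nzRingType) :
  armendariz R -> forall n : nat, (1 <= n)%N -> almost_armendariz 'T_n[R].
Proof.
move=> armR [//|m] _ f g fg0 i j.
apply: uptri_diag0_prime_radical => k.
have diag_fg0 : map_poly (uptri_diag k) f * map_poly (uptri_diag k) g = 0.
  by rewrite -rmorphM fg0 rmorph0.
by rewrite rmorphM /= -!coef_map (armR _ _ diag_fg0).
Qed.
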